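(* Let $k$ be a field of characteristic $0$ containing a primitive fifth root of unity $\zeta$. For $\underline{a}=(a_1,\ldots,a_7)\in k^7$ let $X_{\underline{a}}\subset\mathbb{P}^4$ be defined by $$a_1x_0^3 + a_2x_0x_1x_4 + a_3x_0x_2x_3 + a_4x_1^2x_3 + a_5x_1x_2^2 + a_6x_2x_4^2+a_7x_3^2x_4=0,$$ and assume $X_{\underline{a}}$ is a smooth cubic threefold and that $a_2\neq 0$ or $a_3\neq0$. Then there is a change of coordinates in $\mathbb{P}^4_{\bar k}$ such that $X_{\underline a}$ is isomorphic to $$X_{a,b}:\quad F_{a,b}:=xu^2+2yuv+zv^2+2z^2u+2x^2v+ay^3+bxyz=0$$ for some $a,b\in\bar k$, where $(u:v:x:y:z)$ are homogeneous coordinates on $\mathbb{P}^4$. Moreover, $X_{a,b}$ is smooth if and only if $$D(a,b):=a\,\Delta(a,b)\neq 0,\qquad \Delta(a,b):=512 a^2 + 27 a^3 + 48 a^2 b + 128 a b^2 + 6 a^2 b^2 + 30 a b^3+ a^2 b^3 + 8 b^4 + 2 a b^4 + b^5 .$$ The threefold $X_{a,b}$ has the automorphisms $$\alpha_X(u:v:x:y:z)=(\zeta^2u:\zeta^3v:\zeta x:y:\zeta^4z),\qquad \iota_X(u:v:x:y:z)=(v:u:z:y:x)$$ of order five and two respectively, and they generate a dihedral subgroup $D_5$ of order $10$ of $\mathrm{Aut}(X_{a,b})$. *)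

From HB Require Import structures.
From mathcomp Require Import all_boot all_order all_algebra.
From mathcomp Require Import mpoly.
Set Implicit Arguments. Unset Strict Implicit. Unset Printing Implicit Defensive.
Import Order.TTheory GRing.Theory Num.Theory.
Local Open Scope ring_scope.

(* Coordinates on P^4 are indexed by 'I_5.  For X_a they are x_0..x_4;
   for X_{a,b} they are (u:v:x:y:z) = (0:1:2:3:4). *)

Definition Fa (R : nzRingType) (a1 a2 a3 a4 a5 a6 a7 : R) : {mpoly R[5]} :=
  a1 *: ('X_0 ^+ 3)
  + a2 *: ('X_0 * 'X_1 * 'X_4)
  + a3 *: ('X_0 * 'X_2 * 'X_3)
  + a4 *: ('X_1 ^+ 2 * 'X_3)
  + a5 *: ('X_1 * 'X_2 ^+ 2)
  + a6 *: ('X_2 * 'X_4 ^+ 2)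
  + a7 *: ('X_3 ^+ 2 * 'X_4).

Definition Fab (R : nzRingType) (a b : R) : {mpoly R[5]} :=
  'X_2 * 'X_0 ^+ 2
  + ('X_3 * 'X_0 * 'X_1) *+ 2
  + 'X_4 * 'X_1 ^+ 2
  + ('X_4 ^+ 2 * 'X_0) *+ 2
  + ('X_2 ^+ 2 * 'X_1) *+ 2
  + a *: ('X_3 ^+ 3)
  + b *: ('X_2 * 'X_3 * 'X_4).

Definition Delta (R : nzRingType) (a b : R) : R :=
  512%:R * a ^+ 2 + 27%:R * a ^+ 3 + 48%:R * a ^+ 2 * b + 128%:R * a * b ^+ 2
  + 6%:R * a ^+ 2 * b ^+ 2 + 30%:R * a * b ^+ 3 + a ^+ 2 * b ^+ 3
  + 8%:R * b ^+ 4 + 2%:R * a * b ^+ 4 + b ^+ 5.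

Definition Dab (R : nzRingType) (a b : R) : R := a * Delta a b.

(* Over an algebraically closed field L, the hypersurface
   {F = 0} is smooth iff it has no singular point. (For F = 0 every point is
   singular, so smoothness also forces F <> 0.) *)
Definition smooth_hypersurface (L : nzRingType) (F : {mpoly L[5]}) : Prop :=
  forall x : 'I_5 -> L,
    F.@[x] = 0 -> (forall i : 'I_5, (F^`M(i)).@[x] = 0) -> forall i, x i = 0.

Definition lin (L : nzRingType) (M : 'M[L]_5) (x : 'I_5 -> L) : 'I_5 -> L :=
  fun i => \sum_(j < 5) M i j * x j.

(* Equality in PGL_5 : the matrices differ by a nonzero scalar. *)
Definition pequiv (L : nzRingType) (M N : 'M[L]_5) : Prop :=
  exists c : L, c != 0 /\ M = c *: N.

Definition is_aut_of (L : comUnitRingType) (F : {mpoly L[5]}) (A : 'M[L]_5)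
  : Prop :=
  A \in unitmx /\ forall x : 'I_5 -> L, F.@[lin A x] = 0 <-> F.@[x] = 0.

Definition alphaM (L : nzRingType) (zeta : L) : 'M[L]_5 :=
  diag_mx (\row_(i < 5) nth 0 [:: zeta ^+ 2; zeta ^+ 3; zeta; 1; zeta ^+ 4] i).

(* iota_X (u:v:x:y:z) = (v:u:z:y:x): coordinate i of the image is
   coordinate (iota_idx i) of the argument. *)
Definition iota_idx (i : 'I_5) : nat := nth 0%N [:: 1%N; 0%N; 4%N; 3%N; 2%N] i.

Definition iotaM (L : nzRingType) : 'M[L]_5 :=
  \matrix_(i < 5, j < 5) (j == iota_idx i :> nat)%:R.

From HB Require Import structures.
From mathcomp Require Import all_boot all_order all_algebra.
From mathcomp Require Import mpoly.
From mathcomp Require Import ring.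
Import Order.TTheory GRing.Theory Num.Theory.
Local Open Scope ring_scope.
Set Implicit Arguments. Unset Strict Implicit. Unset Printing Implicit Defensive.

(* Normal form: a permutation of the coordinates (one when a_2 != 0, another
   when a_3 != 0) turns the seven monomials of F_a into those of F_{a,b}, and a
   diagonal rescaling (which needs a fifth root) adjusts five of their
   coefficients to 1, 2, 1, 2, 2.  This requires the
   coefficients of x_1^2 x_3, x_1 x_2^2, x_2 x_4^2, x_3^2 x_4 to be nonzero,
   which smoothness forces, since otherwise a coordinate point is singular.

   Smoothness: by Euler's relation the singular points are the common zeros of
   the five partials.  Those with y = 0 vanish.  On the chart y = 1 the partials
   force x^5 = z^5, so the automorphism alpha moves the point to one with x = z;
   there u = v, and eliminating u, b and a gives a = 0 or Delta(a,b) = 0.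
   Conversely (0:0:0:1:0) is singular when a = 0, and when Delta(a,b) = 0 the
   cubic and quintic conditions for (w:w:t:1:t) to be singular have a common
   root t, since their resultant is Delta(a,b).

   Automorphisms: alpha and iota are monomial matrices, so every claim is a
   computation on their weights and permutations. *)

Lemma mderivXU (R : comNzRingType) (n : nat) (i j : 'I_n) :
  ('X_j : {mpoly R[n]})^`M(i) = (j == i)%:R.
Proof.
rewrite mderivX mnm1E; case: eqP => [->|_]; last by rewrite scale0r.
have ->: (U_(i) - U_(i))%MM = 0%MM by apply/mnmP => k; rewrite mnmBE subnn mnm0E.
by rewrite mpolyX0 scale1r.
Qed.

Ltac expand_meval :=
  rewrite ?(expr2, exprS) ?(mderivD, mderivMn, mderivZ, mderivM, mderivXU);
  rewrite ?(mevalD, mevalMn, mevalZ, mevalM, mevalXU) /= ?rmorph_nat; ring.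

Section Evaluation.
Variables (R : comNzRingType) (x : 'I_5 -> R).

Section Fab.
Variables a b : R.

Lemma meval_Fab : (Fab a b).@[x] = x 2 * x 0 ^+ 2 + (x 3 * x 0 * x 1) *+ 2
  + x 4 * x 1 ^+ 2 + (x 4 ^+ 2 * x 0) *+ 2 + (x 2 ^+ 2 * x 1) *+ 2
  + a * x 3 ^+ 3 + b * (x 2 * x 3 * x 4).
Proof. rewrite /Fab; expand_meval. Qed.

Lemma meval_dFab0 : ((Fab a b)^`M(0)).@[x] = (x 2 * x 0 + x 3 * x 1 + x 4 ^+ 2) *+ 2.
Proof. rewrite /Fab; expand_meval. Qed.

Lemma meval_dFab1 : ((Fab a b)^`M(1)).@[x] = (x 3 * x 0 + x 4 * x 1 + x 2 ^+ 2) *+ 2.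
Proof. rewrite /Fab; expand_meval. Qed.

Lemma meval_dFab2 :
  ((Fab a b)^`M(2)).@[x] = x 0 ^+ 2 + 4%:R * x 2 * x 1 + b * x 3 * x 4.
Proof. rewrite /Fab; expand_meval. Qed.

Lemma meval_dFab3 :
  ((Fab a b)^`M(3)).@[x] = 2%:R * x 0 * x 1 + 3%:R * a * x 3 ^+ 2 + b * x 2 * x 4.
Proof. rewrite /Fab; expand_meval. Qed.

Lemma meval_dFab4 :
  ((Fab a b)^`M(4)).@[x] = x 1 ^+ 2 + 4%:R * x 4 * x 0 + b * x 2 * x 3.
Proof. rewrite /Fab; expand_meval. Qed.

Lemma Fab_Euler : 3%:R * (Fab a b).@[x] =
  x 0 * ((Fab a b)^`M(0)).@[x] + x 1 * ((Fab a b)^`M(1)).@[x]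
  + x 2 * ((Fab a b)^`M(2)).@[x] + x 3 * ((Fab a b)^`M(3)).@[x]
  + x 4 * ((Fab a b)^`M(4)).@[x].
Proof.
rewrite meval_Fab meval_dFab0 meval_dFab1 meval_dFab2 meval_dFab3 meval_dFab4.
ring.
Qed.

End Fab.

Section Fa.
Variables a1 a2 a3 a4 a5 a6 a7 : R.
Let F := Fa a1 a2 a3 a4 a5 a6 a7.

Lemma meval_Fa : F.@[x] = a1 * x 0 ^+ 3 + a2 * (x 0 * x 1 * x 4)
  + a3 * (x 0 * x 2 * x 3) + a4 * (x 1 ^+ 2 * x 3) + a5 * (x 1 * x 2 ^+ 2)
  + a6 * (x 2 * x 4 ^+ 2) + a7 * (x 3 ^+ 2 * x 4).
Proof. rewrite /F /Fa; expand_meval. Qed.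

Lemma meval_dFa0 :
  (F^`M(0)).@[x] = 3%:R * a1 * x 0 ^+ 2 + a2 * x 1 * x 4 + a3 * x 2 * x 3.
Proof. rewrite /F /Fa; expand_meval. Qed.

Lemma meval_dFa1 :
  (F^`M(1)).@[x] = a2 * x 0 * x 4 + 2%:R * a4 * x 1 * x 3 + a5 * x 2 ^+ 2.
Proof. rewrite /F /Fa; expand_meval. Qed.

Lemma meval_dFa2 :
  (F^`M(2)).@[x] = a3 * x 0 * x 3 + 2%:R * a5 * x 1 * x 2 + a6 * x 4 ^+ 2.
Proof. rewrite /F /Fa; expand_meval. Qed.

Lemma meval_dFa3 :
  (F^`M(3)).@[x] = a3 * x 0 * x 2 + a4 * x 1 ^+ 2 + 2%:R * a7 * x 3 * x 4.
Proof. rewrite /F /Fa; expand_meval. Qed.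

Lemma meval_dFa4 :
  (F^`M(4)).@[x] = a2 * x 0 * x 1 + 2%:R * a6 * x 2 * x 4 + a7 * x 3 ^+ 2.
Proof. rewrite /F /Fa; expand_meval. Qed.

End Fa.
End Evaluation.

Lemma map_mpoly_Fa (k L : comNzRingType) (f : {rmorphism k -> L})
    (a1 a2 a3 a4 a5 a6 a7 : k) :
  map_mpoly f (Fa a1 a2 a3 a4 a5 a6 a7)
  = Fa (f a1) (f a2) (f a3) (f a4) (f a5) (f a6) (f a7).
Proof. by rewrite /Fa !rmorphD /= !map_mpolyZ !rmorphM /= ?rmorphXn /= !map_mpolyX. Qed.

Lemma ord5_ind (P : 'I_5 -> Prop) : P 0 -> P 1 -> P 2 -> P 3 -> P 4 -> forall i, P i.
Proof.
move=> P0 P1 P2 P3 P4 [[|[|[|[|[|//]]]]] lti].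
- by rewrite (_ : Ordinal lti = 0) //; apply: val_inj.
- by rewrite (_ : Ordinal lti = 1) //; apply: val_inj.
- by rewrite (_ : Ordinal lti = 2) //; apply: val_inj.
- by rewrite (_ : Ordinal lti = 3) //; apply: val_inj.
- by rewrite (_ : Ordinal lti = 4) //; apply: val_inj.
Qed.

Definition coords (R : nzRingType) (u v x y z : R) : 'I_5 -> R :=
  fun i => nth 0 [:: u; v; x; y; z] i.

Section MonomialMatrix.
Variables (R : comNzRingType) (n : nat).
Implicit Types (s t : 'I_n -> R) (sigma tau : 'I_n -> 'I_n).

Definition monomial_mx s sigma : 'M[R]_n := \matrix_(i, j) (s i *+ (j == sigma i)).

Lemma eq_monomial_mx s s' sigma sigma' :
  s =1 s' -> sigma =1 sigma' -> monomial_mx s sigma = monomial_mx s' sigma'.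
Proof. by move=> eq_s eq_sigma; apply/matrixP => i j; rewrite !mxE eq_s eq_sigma. Qed.

Lemma monomial_mx1 : monomial_mx (fun=> 1) id = 1.
Proof. by apply/matrixP => i j; rewrite !mxE eq_sym. Qed.

Lemma mul_monomial_mx s sigma t tau :
  monomial_mx s sigma * monomial_mx t tau
  = monomial_mx (fun i => s i * t (sigma i)) (tau \o sigma).
Proof.
apply/matrixP => i j; rewrite -mulmxE !mxE (bigD1 (sigma i)) //= big1 ?addr0.
  by rewrite !mxE eqxx mulr1n mulrnAr.
by move=> k /negbTE k_neq; rewrite !mxE k_neq mulr0n mul0r.
Qed.

Lemma monomial_mx_id_exp s m :
  monomial_mx s id ^+ m = monomial_mx (fun i => s i ^+ m) id.
Proof.
elim: m => [|m IHm]; first by rewrite expr0 -monomial_mx1.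
by rewrite exprS IHm mul_monomial_mx; apply: eq_monomial_mx => i //=; rewrite -exprS.
Qed.

Lemma monomial_mx_one_exp sigma m :
  monomial_mx (fun=> 1) sigma ^+ m = monomial_mx (fun=> 1) (iter m sigma).
Proof.
elim: m => [|m IHm]; first by rewrite expr0 -monomial_mx1.
rewrite exprS IHm mul_monomial_mx; apply: eq_monomial_mx => i /=.
  by rewrite mulr1.
by rewrite -iterS -iterSr.
Qed.

End MonomialMatrix.

Lemma lin_monomial_mx (R : comNzRingType) (s : 'I_5 -> R) sigma x i :
  lin (monomial_mx s sigma) x i = s i * x (sigma i).
Proof.
rewrite /lin (bigD1 (sigma i)) //= big1 ?addr0; first by rewrite mxE eqxx mulr1n.
by move=> j /negbTE j_neq; rewrite mxE j_neq mulr0n mul0r.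
Qed.

Lemma monomial_mx_unit (L : fieldType) n (s : 'I_n -> L) (sigma rho : 'I_n -> 'I_n) :
  cancel sigma rho -> (forall i, s i != 0) -> monomial_mx s sigma \in unitmx.
Proof.
move=> sigmaK s_neq0.
have [] // := @mulmx1_unit _ _ (monomial_mx s sigma)
  (monomial_mx (fun i => (s (rho i))^-1) rho).
rewrite mulmxE mul_monomial_mx idmxE -monomial_mx1.
by apply: eq_monomial_mx => i /=; rewrite sigmaK ?divff.
Qed.

Lemma pequiv_monomial_mx (L : fieldType) (s t : 'I_5 -> L) (sigma tau : 'I_5 -> 'I_5) :
  (forall i, s i != 0) ->
  pequiv (monomial_mx s sigma) (monomial_mx t tau) ->
  sigma =1 tau /\ exists c, forall i, s i = c * t i.
Proof.
move=> s_neq0 [c [_ E]].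
have Es i : s i = c * t i *+ (sigma i == tau i).
  by move/matrixP: E => /(_ i (sigma i)); rewrite !mxE eqxx mulr1n mulrnAr.
have eq_sigma i : sigma i = tau i.
  by apply/eqP; apply: contra_neqT (s_neq0 i) => /negbTE neq; rewrite Es neq mulr0n.
by split=> //; exists c => i; rewrite Es eq_sigma eqxx mulr1n.
Qed.

Lemma meval_lin_monomial_mx (R : comNzRingType) (p : {mpoly R[5]})
    (s : 'I_5 -> R) (sigma : 'I_5 -> 'I_5) (x : 'I_5 -> R) :
  p.@[lin (monomial_mx s sigma) x] = p.@[fun i => s i * x (sigma i)].
Proof. by apply: meval_eq => i; rewrite lin_monomial_mx. Qed.

Section ChartCritical.
Variable L : fieldType.
Hypothesis three_neq0 : (3%:R : L) != 0.
Hypothesis five_neq0 : (5%:R : L) != 0.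

(* The partial derivatives of F_{a,b} at (u:v:x:1:z), the first two divided by 2. *)
Definition chart_critical (a b u v x z : L) : Prop :=
  [/\ x * u + v + z ^+ 2 = 0, u + z * v + x ^+ 2 = 0,
      u ^+ 2 + 4%:R * x * v + b * z = 0, 2%:R * u * v + 3%:R * a + b * x * z = 0
    & v ^+ 2 + 4%:R * z * u + b * x = 0].

Lemma chart_critical_alpha (a b u v x z l : L) : l ^+ 5 = 1 ->
  chart_critical a b u v x z ->
  chart_critical a b (l ^+ 2 * u) (l ^+ 3 * v) (l * x) (l ^+ 4 * z).
Proof.
move=> l5 [Eu Ev Ex Ey Ez]; split.
- transitivity (l ^+ 3 * (x * u + v + z ^+ 2)); first by ring: l5.
  by rewrite Eu mulr0.
- transitivity (l ^+ 2 * (u + z * v + x ^+ 2)); first by ring: l5.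
  by rewrite Ev mulr0.
- transitivity (l ^+ 4 * (u ^+ 2 + 4%:R * x * v + b * z)); first by ring: l5.
  by rewrite Ex mulr0.
- transitivity (2%:R * u * v + 3%:R * a + b * x * z); first by ring: l5.
  by rewrite Ey.
- transitivity (l * (v ^+ 2 + 4%:R * z * u + b * x)); first by ring: l5.
  by rewrite Ez mulr0.
Qed.

Lemma chart_critical_x5 (a b u v x z : L) :
  chart_critical a b u v x z -> x ^+ 5 = z ^+ 5.
Proof.
case=> Eu Ev Ex _ Ez.
have Du : u * (x * z - 1) = x ^+ 2 - z ^+ 3.
  transitivity (z * (x * u + v + z ^+ 2) - (u + z * v + x ^+ 2) + x ^+ 2 - z ^+ 3).
    by ring.
  by rewrite Eu Ev mulr0 subr0 add0r.
have Dv : v * (x * z - 1) = z ^+ 2 - x ^+ 3.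
  transitivity (x * (u + z * v + x ^+ 2) - (x * u + v + z ^+ 2) + z ^+ 2 - x ^+ 3).
    by ring.
  by rewrite Eu Ev mulr0 subr0 add0r.
have [xz1 | xz1] := eqVneq (x * z) 1.
  move: Du Dv; rewrite xz1 subrr !mulr0 => /esym/eqP; rewrite subr_eq0 => /eqP x2.
  move=> /esym/eqP; rewrite subr_eq0 => /eqP z2.
  by rewrite (exprD _ 2 3) (exprD _ 3 2) x2 z2.
(* x * (Ex) - z * (Ez), multiplied by (x z - 1)^2 and rewritten with Du, Dv. *)
have : (x ^+ 5 - z ^+ 5) * (x * z - 1) * 5%:R = 0.
  transitivity (- (x * (u * (x * z - 1)) ^+ 2
      + 4%:R * x ^+ 2 * (v * (x * z - 1)) * (x * z - 1)
      - z * (v * (x * z - 1)) ^+ 2 - 4%:R * z ^+ 2 * (u * (x * z - 1)) * (x * z - 1))).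
    by rewrite Du Dv; ring.
  transitivity (- (x * z - 1) ^+ 2 *
    (x * (u ^+ 2 + 4%:R * x * v + b * z) - z * (v ^+ 2 + 4%:R * z * u + b * x))).
    by ring.
  by rewrite Ex Ez; ring.
by move/eqP; rewrite !mulf_eq0 (negbTE five_neq0) !subr_eq0 (negbTE xz1) !orbF => /eqP.
Qed.

Lemma chart_critical_diag (a b u v t : L) :
  chart_critical a b u v t t -> a != 0 -> Delta a b = 0.
Proof.
(* The partials force u = v (as 5 != 0), and then determine u, b and a in
   terms of t. *)
case=> Eu Ev Ex Ey Ez a_neq0.
have Euv : (t - 1) * (u - v) = 0.
  transitivity ((t * u + v + t ^+ 2) - (u + t * v + t ^+ 2)); first by ring.
  by rewrite Eu Ev subrr.
have Euv' : (u - v) * (u + v - 4%:R * t) = 0.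
  transitivity ((u ^+ 2 + 4%:R * t * v + b * t) - (v ^+ 2 + 4%:R * t * u + b * t)).
    by ring.
  by rewrite Ex Ez subrr.
have {Ev Ez Euv Euv'} uv : u = v.
  have [//|] := eqVneq u v; rewrite -subr_eq0 => uv_neq0.
  exfalso; move/eqP: five_neq0; apply.
  move/eqP: Euv; rewrite mulf_eq0 (negbTE uv_neq0) orbF subr_eq0 => /eqP t1.
  move/eqP: Euv'; rewrite mulf_eq0 (negbTE uv_neq0) subr_eq0 => /eqP uv4.
  transitivity ((t * u + v + t ^+ 2) - (u + v) + 4%:R * t).
    by rewrite t1; ring.
  by rewrite Eu uv4 sub0r t1; ring.
subst v.
have t1_neq0 : t + 1 != 0.
  apply: contra_eqN Eu => /eqP t1.
  have -> : t * u + u + t ^+ 2 = (t + 1) * (u + t - 1) + 1 by ring.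
  by rewrite t1 mul0r add0r oner_eq0.
have t_neq0 : t != 0.
  apply: contra_neq a_neq0 => t0.
  have u0 : u = 0 by rewrite -Eu t0; ring.
  by apply: (mulfI three_neq0); rewrite mulr0 -Ey u0 t0; ring.
have hu : u = - t ^+ 2 / (t + 1).
  apply: (mulIf t1_neq0); rewrite divfK //.
  by transitivity ((t * u + u + t ^+ 2) - t ^+ 2); [ring | rewrite Eu sub0r].
have hb : b = - (u ^+ 2 + 4%:R * t * u) / t.
  apply: (mulIf t_neq0); rewrite divfK //.
  transitivity ((u ^+ 2 + 4%:R * t * u + b * t) - (u ^+ 2 + 4%:R * t * u)).
    by ring.
  by rewrite Ex sub0r.
have ha : a = - (2%:R * u * u + b * t * t) / 3%:R.
  apply: (mulIf three_neq0); rewrite divfK //.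
  transitivity ((2%:R * u * u + 3%:R * a + b * t * t) - (2%:R * u * u + b * t * t)).
    by ring.
  by rewrite Ey sub0r.
by rewrite ha hb hu /Delta; field; rewrite t_neq0 t1_neq0 three_neq0.
Qed.

Lemma chart_critical_Delta (a b u v x z : L) :
  chart_critical a b u v x z -> a != 0 -> Delta a b = 0.
Proof.
move=> E a_neq0; have x5 := chart_critical_x5 E.
have x_neq0 : x != 0.
  apply: contra_neq a_neq0 => x0; case: E => Eu Ev _ Ey _.
  have : z ^+ 5 == 0 by rewrite -x5 x0 expr0n.
  rewrite expf_eq0 /= => /eqP z0.
  have u0 : u = 0 by rewrite -Ev x0 z0; ring.
  have v0 : v = 0 by rewrite -Eu x0 z0; ring.
  by apply: (mulfI three_neq0); rewrite mulr0 -Ey u0 v0 x0; ring.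
(* Rotate by alpha to reach the diagonal x = z: with r = z / x a fifth root of
   unity, l = r ^ 3 satisfies l ^ 4 * z = l * x. *)
pose r := z / x; pose l := r ^+ 3.
have r5 : r ^+ 5 = 1.
  by rewrite /r expr_div_n x5 divff // -x5 expf_eq0 (negbTE x_neq0) andbF.
have l5 : l ^+ 5 = 1 by rewrite /l -exprM mulnC exprM r5 expr1n.
have := chart_critical_alpha l5 E.
have -> : l ^+ 4 * z = l * x.
  have -> : z = r * x by rewrite /r divfK.
  by rewrite /l; ring: r5.
by move/chart_critical_diag; apply.
Qed.

(* The partials of F_{a,b} at (u:v:x:0:z), the first two divided by 2. *)
Lemma critical_y0_eq0 (u v x z : L) :
  x * u + z ^+ 2 = 0 -> z * v + x ^+ 2 = 0 ->
  u ^+ 2 + 4%:R * x * v = 0 -> v ^+ 2 + 4%:R * z * u = 0 ->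
  [/\ u = 0, v = 0, x = 0 & z = 0].
Proof.
move=> Eu Ev Ex Ez.
have Hz : z ^+ 5 - 4%:R * x ^+ 5 = 0.
  transitivity (z * x ^+ 2 * (u ^+ 2 + 4%:R * x * v)
    - z * (x * u - z ^+ 2) * (x * u + z ^+ 2) - 4%:R * x ^+ 3 * (z * v + x ^+ 2)).
    by ring.
  by rewrite Eu Ev Ex; ring.
have Hx : x ^+ 5 - 4%:R * z ^+ 5 = 0.
  transitivity (x * z ^+ 2 * (v ^+ 2 + 4%:R * z * u)
    - x * (z * v - x ^+ 2) * (z * v + x ^+ 2) - 4%:R * z ^+ 3 * (x * u + z ^+ 2)).
    by ring.
  by rewrite Eu Ev Ez; ring.
have x0 : x = 0.
  have : 3%:R * 5%:R * x ^+ 5 == 0.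
    by apply/eqP; transitivity (- (x ^+ 5 - 4%:R * z ^+ 5) - 4%:R * (z ^+ 5 - 4%:R * x ^+ 5));
      [ring | rewrite Hx Hz; ring].
  by rewrite !mulf_eq0 (negbTE three_neq0) (negbTE five_neq0) /= !orbb => /eqP.
have z0 : z = 0.
  have : z ^+ 5 == 0 by apply/eqP; rewrite -Hz x0; ring.
  by rewrite expf_eq0 => /eqP.
have u0 : u = 0.
  have : u ^+ 2 == 0 by rewrite -Ex x0; apply/eqP; ring.
  by rewrite expf_eq0 => /eqP.
have v0 : v = 0.
  have : v ^+ 2 == 0 by rewrite -Ez z0; apply/eqP; ring.
  by rewrite expf_eq0 => /eqP.
by [].
Qed.

End ChartCritical.

Section ClosedFieldRoots.
Variable L : closedFieldType.

Lemma closed_quadratic_root (p q : L) : exists t, t ^+ 2 + p * t + q = 0.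
Proof.
have [t Et] := @solve_monicpoly L 2 (nth 0 [:: - q; - p]) isT.
by exists t; rewrite Et !big_ord_recr big_ord0 /=; ring.
Qed.

Lemma closed_cubic_root (p q r : L) : exists t, t ^+ 3 + p * t ^+ 2 + q * t + r = 0.
Proof.
have [t Et] := @solve_monicpoly L 3 (nth 0 [:: - r; - q; - p]) isT.
by exists t; rewrite Et !big_ord_recr big_ord0 /=; ring.
Qed.

Lemma closed_fifth_root (c : L) : exists t, t ^+ 5 = c.
Proof.
have [t Et] := @solve_monicpoly L 5 (nth 0 [:: c]) isT.
by exists t; rewrite Et !big_ord_recr big_ord0 /=; ring.
Qed.

Lemma closed_cubic_Vieta (p q r : L) : exists t1 t2 t3,
  [/\ t1 + t2 + t3 = - p, t1 * t2 + t1 * t3 + t2 * t3 = q & t1 * t2 * t3 = - r].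
Proof.
have [t1 E1] := closed_cubic_root p q r.
have [t2 E2] := closed_quadratic_root (p + t1) (q + t1 * (p + t1)).
exists t1, t2, (- (p + t1) - t2); split; first by ring.
- transitivity (q - (t2 ^+ 2 + (p + t1) * t2 + (q + t1 * (p + t1)))); first by ring.
  by rewrite E2 subr0.
- transitivity (- t1 * (t2 ^+ 2 + (p + t1) * t2 + (q + t1 * (p + t1)))
      + (t1 ^+ 3 + p * t1 ^+ 2 + q * t1 + r) - r); first by ring.
  by rewrite E1 E2 mulr0 !add0r.
Qed.

End ClosedFieldRoots.

Lemma prod_quadratic_at_roots (R : comNzRingType) (t1 t2 t3 c0 c1 c2 : R) :
  let e1 := t1 + t2 + t3 in let e2 := t1 * t2 + t1 * t3 + t2 * t3 in
  let e3 := t1 * t2 * t3 in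
  (c2 * t1 ^+ 2 + c1 * t1 + c0) * (c2 * t2 ^+ 2 + c1 * t2 + c0)
    * (c2 * t3 ^+ 2 + c1 * t3 + c0)
  = c0 ^+ 3 + e3 * c1 ^+ 3 - 3%:R * e3 * c0 * c1 * c2 + e3 ^+ 2 * c2 ^+ 3
    + e2 * c0 * c1 ^+ 2 - 2%:R * e2 * c0 ^+ 2 * c2 + e2 * e3 * c1 * c2 ^+ 2
    + e2 ^+ 2 * c0 * c2 ^+ 2 + e1 * c0 ^+ 2 * c1 + e1 * e3 * c1 ^+ 2 * c2
    - 2%:R * e1 * e3 * c0 * c2 ^+ 2 + e1 * e2 * c0 * c1 * c2 + e1 ^+ 2 * c0 ^+ 2 * c2.
Proof. by move=> e1 e2 e3; rewrite /e1 /e2 /e3; ring. Qed.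

(* The point (w:w:t:1:t) with w = - t^2 / (1 + t) is singular on X_{a,b}
   exactly when diag_cubic b t = 0 = diag_quintic a t. *)
Definition diag_cubic (R : nzRingType) (b t : R) : R :=
  t ^+ 2 * (3%:R * t + 4%:R) - b * (1 + t) ^+ 2.
Definition diag_quintic (R : nzRingType) (a t : R) : R :=
  t ^+ 4 * (t + 2%:R) + a * (1 + t) ^+ 2.

Lemma diag_common_root (L : closedFieldType) (a b : L) : (3%:R : L) != 0 ->
  Delta a b = 0 -> exists t, diag_cubic b t = 0 /\ diag_quintic a t = 0.
Proof.
move=> three_neq0 Delta0.
have [t1 [t2 [t3 [V1 V2 V3]]]] :=
  closed_cubic_Vieta ((4%:R - b) / 3%:R) (- (2%:R * b) / 3%:R) (- b / 3%:R).
have cubicE s : diag_cubic b s = 3%:R * ((s - t1) * (s - t2) * (s - t3)).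
  transitivity (3%:R * (s ^+ 3 - (t1 + t2 + t3) * s ^+ 2
    + (t1 * t2 + t1 * t3 + t2 * t3) * s - t1 * t2 * t3)).
    by rewrite V1 V2 V3 /diag_cubic; field.
  by ring.
(* Euclidean division of 27 * diag_quintic by diag_cubic. *)
pose c2 := 27%:R * a + 32%:R - 3%:R * b + 6%:R * b ^+ 2 + b ^+ 3.
pose c1 := 54%:R * a - 10%:R * b + 11%:R * b ^+ 2 + 2%:R * b ^+ 3.
pose c0 := 27%:R * a - 8%:R * b + 4%:R * b ^+ 2 + b ^+ 3.
have quinticE s : 27%:R * diag_quintic a s =
    (9%:R * s ^+ 2 + (6%:R + 3%:R * b) * s + (b ^+ 2 + 4%:R * b - 8%:R)) * diag_cubic b s
    + (c2 * s ^+ 2 + c1 * s + c0).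
  by rewrite /diag_cubic /diag_quintic /c2 /c1 /c0; ring.
have resultantE : (c2 * t1 ^+ 2 + c1 * t1 + c0) * (c2 * t2 ^+ 2 + c1 * t2 + c0)
    * (c2 * t3 ^+ 2 + c1 * t3 + c0) = 81%:R * Delta a b.
  by rewrite prod_quadratic_at_roots V1 V2 V3 /c0 /c1 /c2 /Delta; field.
have common_root t : (t - t1) * (t - t2) * (t - t3) = 0 ->
    c2 * t ^+ 2 + c1 * t + c0 = 0 -> diag_cubic b t = 0 /\ diag_quintic a t = 0.
  move=> t_root rem0; have cubic0 : diag_cubic b t = 0 by rewrite cubicE t_root mulr0.
  split=> //; apply: (mulfI (_ : 27%:R != 0)).
    by rewrite (_ : 27 = 3 * 3 * 3)%N // !natrM !mulf_neq0.
  by rewrite quinticE cubic0 rem0; ring.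
move: resultantE; rewrite Delta0 mulr0 => /eqP; rewrite !mulf_eq0 -!orbA.
by case/or3P => /eqP rem0; [exists t1 | exists t2 | exists t3];
  apply: common_root rem0; ring.
Qed.

Section SmoothFab.
Variable L : fieldType.
Hypothesis two_neq0 : (2%:R : L) != 0.
Hypothesis three_neq0 : (3%:R : L) != 0.
Hypothesis five_neq0 : (5%:R : L) != 0.

Lemma smooth_FabP (a b : L) : smooth_hypersurface (Fab a b) <->
  forall x, (forall i, ((Fab a b)^`M(i)).@[x] = 0) -> forall i, x i = 0.
Proof.
split=> [smooth_F x dF | crit x _]; last exact: crit.
have F0 : (Fab a b).@[x] = 0.
  by apply: (mulfI three_neq0); rewrite Fab_Euler !dF; ring.
exact: smooth_F F0 dF.
Qed.

Lemma Fab_grad_eq0 (a b : L) (x : 'I_5 -> L) : Dab a b != 0 ->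
  (forall i, ((Fab a b)^`M(i)).@[x] = 0) -> forall i, x i = 0.
Proof.
move=> D_neq0 dF.
have [a_neq0 Delta_neq0] : a != 0 /\ Delta a b != 0.
  by apply/andP; rewrite -negb_or -mulf_eq0.
have half (c : L) : c *+ 2 = 0 -> c = 0.
  by move/eqP; rewrite -mulr_natr mulf_eq0 (negbTE two_neq0) orbF => /eqP.
move: (dF 0) (dF 1) (dF 2) (dF 3) (dF 4).
rewrite meval_dFab0 meval_dFab1 meval_dFab2 meval_dFab3 meval_dFab4.
move=> /half Eu /half Ev Ex Ey Ez.
have [y0 | y_neq0] := eqVneq (x 3) 0.
  rewrite y0 in Eu Ev Ex Ez.
  have [||||u0 v0 x0 z0] :=
    critical_y0_eq0 three_neq0 five_neq0 (u := x 0) (v := x 1) (x := x 2) (z := x 4).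
  - by rewrite -Eu; ring.
  - by rewrite -Ev; ring.
  - by rewrite -Ex; ring.
  - by rewrite -Ez; ring.
  by apply: ord5_ind.
case/eqP: Delta_neq0; apply: (@chart_critical_Delta L three_neq0 five_neq0 a b
  (x 0 / x 3) (x 1 / x 3) (x 2 / x 3) (x 4 / x 3) _ a_neq0).
have y2_neq0 : x 3 ^+ 2 != 0 by rewrite expf_neq0.
split; apply: (mulIf y2_neq0); rewrite mul0r.
- by rewrite -Eu; field.
- by rewrite -Ev; field.
- by rewrite -Ex; field.
- by rewrite -Ey; field.
- by rewrite -Ez; field.
Qed.
End SmoothFab.

Lemma smooth_Fab (L : closedFieldType) (a b : L) :
  (2%:R : L) != 0 -> (3%:R : L) != 0 -> (5%:R : L) != 0 ->
  smooth_hypersurface (Fab a b) <-> Dab a b != 0.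
Proof.
move=> two_neq0 three_neq0 five_neq0.
apply: (iff_trans (smooth_FabP three_neq0 a b)).
split=> [crit | D_neq0]; last by move=> x; apply: Fab_grad_eq0.
have no_critical_y1 (x : 'I_5 -> L) :
    x 3 = 1 -> (forall i, ((Fab a b)^`M(i)).@[x] = 0) -> False.
  by move=> x3 /crit /(_ 3); rewrite x3; apply/eqP; apply: oner_neq0.
apply/negP; rewrite mulf_eq0 => /orP[/eqP a0 | /eqP Delta0].
  apply: (no_critical_y1 (coords 0 0 0 1 0)) => //; apply: ord5_ind;
    rewrite ?(meval_dFab0, meval_dFab1, meval_dFab2, meval_dFab3, meval_dFab4)
      /coords /= ?a0; ring.
have [t [cubic0 quintic0]] := diag_common_root three_neq0 Delta0.
have t1_neq0 : 1 + t != 0.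
  apply: contra_eqN cubic0 => /eqP t1.
  have -> : diag_cubic b t
    = (1 + t) * (3%:R * (1 + t) ^+ 2 - (5%:R + b) * (1 + t) + 1) + 1.
    by rewrite /diag_cubic; ring.
  by rewrite t1 mul0r add0r oner_eq0.
pose w := - t ^+ 2 / (1 + t).
apply: (no_critical_y1 (coords w w t 1 t)) => //; apply: ord5_ind;
  rewrite ?(meval_dFab0, meval_dFab1, meval_dFab2, meval_dFab3, meval_dFab4) /coords /=.
- by rewrite /w; field.
- by rewrite /w; field.
- transitivity (- t * diag_cubic b t / (1 + t) ^+ 2); last by rewrite cubic0; ring.
  by rewrite /w /diag_cubic; field.
- transitivity ((3%:R * diag_quintic a t - t ^+ 2 * diag_cubic b t) / (1 + t) ^+ 2).
    by rewrite /w /diag_cubic /diag_quintic; field.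
  by rewrite cubic0 quintic0; ring.
- transitivity (- t * diag_cubic b t / (1 + t) ^+ 2); last by rewrite cubic0; ring.
  by rewrite /w /diag_cubic; field.
Qed.

Definition alpha_weight (R : nzRingType) (z : R) (i : 'I_5) : R :=
  nth 0 [:: z ^+ 2; z ^+ 3; z; 1; z ^+ 4] i.

Definition iota_ord (i : 'I_5) : 'I_5 := nth 0 [:: 1; 0; 4; 3; 2] i.

Lemma iota_ordK : involutive iota_ord.
Proof. exact: ord5_ind. Qed.

Lemma alphaM_monomial (R : comNzRingType) (z : R) :
  alphaM z = monomial_mx (alpha_weight z) id.
Proof. by apply/matrixP => i j; rewrite !mxE eq_sym. Qed.

Lemma iotaM_monomial (R : comNzRingType) : iotaM R = monomial_mx (fun=> 1) iota_ord.
Proof.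
have iota_idxE i : iota_idx i = iota_ord i by move: i; apply: ord5_ind.
by apply/matrixP => i j; rewrite !mxE iota_idxE.
Qed.

Lemma pequiv_of_eq (L : nzRingType) (M N : 'M[L]_5) : M = N -> pequiv M N.
Proof. by move=> ->; exists 1; rewrite scale1r oner_neq0. Qed.

Section AlphaIota.
Variables (L : fieldType) (z : L).
Hypothesis z_prim : 5.-primitive_root z.

Let z5 : z ^+ 5 = 1 := prim_expr_order z_prim.
Let A := alphaM z.
Let I := iotaM L.

Lemma alpha_weight5 i : alpha_weight z i ^+ 5 = 1.
Proof. by move: i; apply: ord5_ind; rewrite /alpha_weight /=; ring: z5. Qed.

Lemma alpha_weight_iota i : alpha_weight z (iota_ord i) = alpha_weight z i ^+ 4.
Proof. by move: i; apply: ord5_ind; rewrite /alpha_weight /=; ring: z5. Qed.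

Lemma alpha_weight_neq0 i : alpha_weight z i != 0.
Proof.
apply/eqP => w0; move: (alpha_weight5 i); rewrite w0 expr0n => /eqP.
by rewrite eq_sym oner_eq0.
Qed.

Lemma Fab_alpha (a b : L) x : (Fab a b).@[lin A x] = (Fab a b).@[x].
Proof.
by rewrite /A alphaM_monomial meval_lin_monomial_mx !meval_Fab /alpha_weight /=; ring: z5.
Qed.

Lemma Fab_iota (a b : L) x : (Fab a b).@[lin I x] = (Fab a b).@[x].
Proof. by rewrite /I iotaM_monomial meval_lin_monomial_mx !meval_Fab /iota_ord /=; ring. Qed.

Lemma alphaM_aut (a b : L) : is_aut_of (Fab a b) A.
Proof.
split=> [|x]; last by rewrite Fab_alpha.
by rewrite /A alphaM_monomial (monomial_mx_unit (rho := id)) // => i; apply: alpha_weight_neq0.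
Qed.

Lemma iotaM_aut (a b : L) : is_aut_of (Fab a b) I.
Proof.
split=> [|x]; last by rewrite Fab_iota.
by rewrite /I iotaM_monomial (monomial_mx_unit iota_ordK) // => i; apply: oner_neq0.
Qed.

Lemma alphaM_exp m : A ^+ m = monomial_mx (fun i => alpha_weight z i ^+ m) id.
Proof. by rewrite /A alphaM_monomial monomial_mx_id_exp. Qed.

Lemma iotaM_exp m : I ^+ m = monomial_mx (fun=> 1) (iter m iota_ord).
Proof. by rewrite /I iotaM_monomial monomial_mx_one_exp. Qed.

Lemma alphaM_exp5 : A ^+ 5 = 1.
Proof. by rewrite alphaM_exp -monomial_mx1; apply: eq_monomial_mx => // i; apply: alpha_weight5. Qed.

Lemma iotaM_sqr : I ^+ 2 = 1.
Proof. by rewrite iotaM_exp -monomial_mx1; apply: eq_monomial_mx => // i; apply: iota_ordK. Qed.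

Lemma iotaM_alphaM_iotaM : I * A * I = A ^+ 4.
Proof.
rewrite alphaM_exp /A /I alphaM_monomial iotaM_monomial !mul_monomial_mx.
by apply: eq_monomial_mx => i /=; rewrite ?iota_ordK // mul1r mulr1 alpha_weight_iota.
Qed.

Lemma pequiv_alpha_iota (i1 i2 j1 j2 : nat) :
  (i1 < 5)%N -> (i2 < 5)%N -> (j1 < 2)%N -> (j2 < 2)%N ->
  pequiv (A ^+ i1 * I ^+ j1) (A ^+ i2 * I ^+ j2) -> i1 = i2 /\ j1 = j2.
Proof.
move=> lt_i1 lt_i2 lt_j1 lt_j2.
rewrite !alphaM_exp !iotaM_exp !mul_monomial_mx.
case/pequiv_monomial_mx => [i | eq_iota [c Ec]].
  by rewrite mulr1 expf_neq0 // alpha_weight_neq0.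
have j12 : j1 = j2.
  have := eq_iota 0; move: lt_j1 lt_j2; clear Ec eq_iota.
  by case: j1 => [|[|//]]; case: j2 => [|[|//]].
split=> //.
move: (Ec 3) (Ec 2); rewrite /alpha_weight /= !expr1n !mulr1 => <-; rewrite mul1r.
by move/eqP; rewrite (eq_prim_root_expr z_prim) !modn_small // => /eqP.
Qed.

Lemma alpha_iota_dihedral (a b : L) :
  let A := alphaM z in
  let I := iotaM L in
  [/\ is_aut_of (Fab a b) A /\ is_aut_of (Fab a b) I,
      (pequiv (A ^+ 5) 1 /\ (forall m : nat, (0 < m < 5)%N -> ~ pequiv (A ^+ m) 1)),
      (pequiv (I ^+ 2) 1 /\ ~ pequiv I 1),
      pequiv (I * A * I) (A ^+ 4)
    & (forall (i1 i2 j1 j2 : nat), (i1 < 5)%N -> (i2 < 5)%N -> (j1 < 2)%N -> (j2 < 2)%N ->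
        pequiv (A ^+ i1 * I ^+ j1) (A ^+ i2 * I ^+ j2) -> i1 = i2 /\ j1 = j2)].
Proof.
move=> A' I'; split; last exact: pequiv_alpha_iota.
- by split; [apply: alphaM_aut | apply: iotaM_aut].
- split=> [|m /andP[m_gt0 m_lt5] Am1]; first exact: pequiv_of_eq alphaM_exp5.
  suff [m0 _] : m = 0%N /\ 0%N = 0%N by rewrite m0 in m_gt0.
  by apply: pequiv_alpha_iota => //; rewrite !expr0 !mulr1.
- split=> [|I1]; first exact: pequiv_of_eq iotaM_sqr.
  suff [_] : 0%N = 0%N /\ 1%N = 0%N by [].
  by apply: pequiv_alpha_iota => //; rewrite !expr0 !mul1r expr1.
- exact: pequiv_of_eq iotaM_alphaM_iotaM.
Qed.

End AlphaIota.

Lemma smooth_Fa_coef_neq0 (R : comNzRingType) (a1 a2 a3 a4 a5 a6 a7 : R) :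
  smooth_hypersurface (Fa a1 a2 a3 a4 a5 a6 a7) ->
  [/\ a4 != 0, a5 != 0, a6 != 0 & a7 != 0].
Proof.
set F := Fa _ _ _ _ _ _ _ => smooth_F.
pose e j : 'I_5 -> R := fun i => (i == j)%:R.
have nonsingular_coord j : F.@[e j] = 0 -> (forall i, (F^`M(i)).@[e j] = 0) -> False.
  move=> F0 dF; move: (smooth_F _ F0 dF j); rewrite /e eqxx.
  by apply/eqP; apply: oner_neq0.
split; apply/eqP => a0; [apply: (nonsingular_coord 1)
  | apply: (nonsingular_coord 2) | apply: (nonsingular_coord 4)
  | apply: (nonsingular_coord 3)]; try apply: ord5_ind;
  rewrite /F ?meval_Fa ?(meval_dFa0, meval_dFa1, meval_dFa2, meval_dFa3, meval_dFa4)
    /e /= ?a0; ring.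
Qed.

Definition Fab_shape (R : nzRingType) (e1 e2 e3 e4 e5 e6 e7 : R) (x : 'I_5 -> R) : R :=
  e1 * (x 2 * x 0 ^+ 2) + e2 * (x 3 * x 0 * x 1) + e3 * (x 4 * x 1 ^+ 2)
  + e4 * (x 4 ^+ 2 * x 0) + e5 * (x 2 ^+ 2 * x 1) + e6 * x 3 ^+ 3
  + e7 * (x 2 * x 3 * x 4).

Lemma Fab_shape_rescale (L : closedFieldType) (e1 e2 e3 e4 e5 e6 e7 : L) :
  (2%:R : L) != 0 ->
  e1 != 0 -> e2 != 0 -> e3 != 0 -> e4 != 0 -> e5 != 0 ->
  exists (s : 'I_5 -> L) (c a b : L), [/\ forall i, s i != 0, c != 0 &
    forall x, Fab_shape e1 e2 e3 e4 e5 e6 e7 (fun i => s i * x i) = c * (Fab a b).@[x]].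
Proof.
move=> two_neq0 e1_neq0 e2_neq0 e3_neq0 e4_neq0 e5_neq0.
have pow2_neq0 k : (2 ^ k)%:R != 0 :> L by rewrite natrX expf_neq0.
have n4 : (4%:R : L) != 0 := pow2_neq0 2.
have n16 : (16%:R : L) != 0 := pow2_neq0 4.
have n32 : (32%:R : L) != 0 := pow2_neq0 5.
have [c c5] := closed_fifth_root (32%:R * e3 ^+ 2 * e1 ^+ 8 / (e4 * e5 ^+ 4)).
have K_neq0 : 32%:R * e3 ^+ 2 * e1 ^+ 8 / (e4 * e5 ^+ 4) != 0.
  by rewrite !mulf_neq0 ?invr_neq0 ?mulf_neq0.
have c_neq0 : c != 0 by apply: contra_neq K_neq0 => c0; rewrite -c5 c0 expr0n.
have nz := (c_neq0, e1_neq0, e2_neq0, e3_neq0, e4_neq0, e5_neq0, n4, n16).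
(* Matching the coefficients 1, 2, 1, 2, 2 of F_{a,b}, with u left unscaled,
   determines the scalings of v, x, y, z in terms of c; the remaining condition
   (on z^2 u) is the equation for c ^ 5. *)
pose sv := 2%:R * e1 ^+ 2 / (e5 * c).
pose sx := c / e1.
pose sy := c ^+ 2 * e5 / (e2 * e1 ^+ 2).
pose sz := c ^+ 3 * e5 ^+ 2 / (4%:R * e3 * e1 ^+ 4).
have coef_xu2 : e1 * sx = c by rewrite /sx; field; rewrite !nz.
have coef_yuv : e2 * sy * sv = 2%:R * c by rewrite /sy /sv; field; rewrite !nz.
have coef_zv2 : e3 * sz * sv ^+ 2 = c by rewrite /sz /sv; field; rewrite !nz.
have coef_z2u : e4 * sz ^+ 2 = 2%:R * c.
  transitivity (e4 * c * c ^+ 5 * e5 ^+ 4 / (16%:R * e3 ^+ 2 * e1 ^+ 8)).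
    by rewrite /sz; field; rewrite !nz.
  by rewrite c5; field; rewrite !nz.
have coef_x2v : e5 * sx ^+ 2 * sv = 2%:R * c by rewrite /sx /sv; field; rewrite !nz.
exists (coords 1 sv sx sy sz), c, (e6 * sy ^+ 3 / c), (e7 * sx * sy * sz / c).
split=> // [|x].
  apply: ord5_ind; rewrite /coords /= /sv /sx /sy /sz ?oner_neq0 //;
    by rewrite !mulf_neq0 ?invr_neq0 ?mulf_neq0 ?expf_neq0.
rewrite /Fab_shape meval_Fab /coords /=.
transitivity (e1 * sx * (x 2 * x 0 ^+ 2) + e2 * sy * sv * (x 3 * x 0 * x 1)
  + e3 * sz * sv ^+ 2 * (x 4 * x 1 ^+ 2) + e4 * sz ^+ 2 * (x 4 ^+ 2 * x 0)
  + e5 * sx ^+ 2 * sv * (x 2 ^+ 2 * x 1) + e6 * sy ^+ 3 * x 3 ^+ 3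
  + e7 * sx * sy * sz * (x 2 * x 3 * x 4)); first by ring.
by rewrite coef_xu2 coef_yuv coef_zv2 coef_z2u coef_x2v; field; rewrite !nz.
Qed.

Lemma Fab_normal_form_of_perm (L : closedFieldType) (F : {mpoly L[5]})
    (sigma rho : 'I_5 -> 'I_5) (e1 e2 e3 e4 e5 e6 e7 : L) :
  (2%:R : L) != 0 -> cancel sigma rho ->
  e1 != 0 -> e2 != 0 -> e3 != 0 -> e4 != 0 -> e5 != 0 ->
  (forall y, F.@[fun i => y (sigma i)] = Fab_shape e1 e2 e3 e4 e5 e6 e7 y) ->
  exists (M : 'M[L]_5) (a b c : L),
    M \in unitmx /\ c != 0 /\ forall x, F.@[lin M x] = c * (Fab a b).@[x].
Proof.
move=> two_neq0 sigmaK e1_neq0 e2_neq0 e3_neq0 e4_neq0 e5_neq0 F_sigma.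
have [s [c [a [b [s_neq0 c_neq0 Es]]]]] :=
  Fab_shape_rescale e6 e7 two_neq0 e1_neq0 e2_neq0 e3_neq0 e4_neq0 e5_neq0.
exists (monomial_mx (s \o sigma) sigma), a, b, c; split.
  by apply: (monomial_mx_unit sigmaK) => i; apply: s_neq0.
by split=> // x; rewrite meval_lin_monomial_mx -Es -F_sigma.
Qed.

Lemma Fa_normal_form (L : closedFieldType) (a1 a2 a3 a4 a5 a6 a7 : L) :
  (2%:R : L) != 0 -> smooth_hypersurface (Fa a1 a2 a3 a4 a5 a6 a7) ->
  a2 != 0 \/ a3 != 0 ->
  exists (M : 'M[L]_5) (a b c : L), M \in unitmx /\ c != 0 /\
    forall x, (Fa a1 a2 a3 a4 a5 a6 a7).@[lin M x] = c * (Fab a b).@[x].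
Proof.
move=> two_neq0 /smooth_Fa_coef_neq0[a4_neq0 a5_neq0 a6_neq0 a7_neq0].
case=> [a2_neq0 | a3_neq0].
(* (x_0 : x_1 : x_2 : x_3 : x_4) = (y : u : z : x : v) *)
- apply: (@Fab_normal_form_of_perm _ _ (fun i => nth 0 [:: 3; 0; 4; 2; 1] i)
    (fun i => nth 0 [:: 1; 4; 3; 0; 2] i) a4 a2 a6 a5 a7 a1 a3 two_neq0 _
    a4_neq0 a2_neq0 a6_neq0 a5_neq0 a7_neq0) => [|y]; first exact: ord5_ind.
  by rewrite meval_Fa /Fab_shape /=; ring.
(* (x_0 : x_1 : x_2 : x_3 : x_4) = (y : x : u : v : z) *)
- apply: (@Fab_normal_form_of_perm _ _ (fun i => nth 0 [:: 3; 2; 0; 1; 4] i)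
    (fun i => nth 0 [:: 2; 3; 1; 0; 4] i) a5 a3 a7 a6 a4 a1 a2 two_neq0 _
    a5_neq0 a3_neq0 a7_neq0 a6_neq0 a4_neq0) => [|y]; first exact: ord5_ind.
  by rewrite meval_Fa /Fab_shape /=; ring.
Qed.

Theorem lemma1p2 (k : fieldType) (zeta : k)
    (L : closedFieldType) (f : {rmorphism k -> L}) :
  [pchar k] =i pred0 ->
  5.-primitive_root zeta ->
  (* normal form *)
  (forall a1 a2 a3 a4 a5 a6 a7 : k,
     smooth_hypersurface (map_mpoly f (Fa a1 a2 a3 a4 a5 a6 a7)) ->
     (a2 != 0 \/ a3 != 0) ->
     exists (M : 'M[L]_5) (a b c : L),
       M \in unitmx /\ c != 0 /\
       forall x : 'I_5 -> L,
         (map_mpoly f (Fa a1 a2 a3 a4 a5 a6 a7)).@[lin M x]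
           = c * (Fab a b).@[x])
  /\
  (* smoothness criterion *)
  (forall a b : L, smooth_hypersurface (Fab a b) <-> Dab a b != 0)
  /\
  (* the dihedral group of automorphisms *)
  (forall a b : L,
     let A := alphaM (f zeta) in
     let I := iotaM L in
     [/\ is_aut_of (Fab a b) A /\ is_aut_of (Fab a b) I,
         (pequiv (A ^+ 5) 1 /\ (forall m : nat, (0 < m < 5)%N -> ~ pequiv (A ^+ m) 1)),
         (pequiv (I ^+ 2) 1 /\ ~ pequiv I 1),
         pequiv (I * A * I) (A ^+ 4)
       & (forall (i1 i2 j1 j2 : nat), (i1 < 5)%N -> (i2 < 5)%N -> (j1 < 2)%N -> (j2 < 2)%N ->
           pequiv (A ^+ i1 * I ^+ j1) (A ^+ i2 * I ^+ j2) -> i1 = i2 /\ j1 = j2)]).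
Proof.
move=> char0 zeta_prim.
have natr_neq0 n : (0 < n)%N -> (n%:R : L) != 0.
  by move=> n_gt0; rewrite -(rmorph_nat f) fmorph_eq0 ((pcharf0P k).1 char0 n) -lt0n.
split.
  move=> a1 a2 a3 a4 a5 a6 a7; rewrite map_mpoly_Fa => smooth_F a23.
  apply: Fa_normal_form smooth_F _; first exact: natr_neq0.
  by case: a23 => ?; [left | right]; rewrite fmorph_eq0.
split; first by move=> a b; apply: smooth_Fab; apply: natr_neq0.
by move=> a b; apply: alpha_iota_dihedral; rewrite fmorph_primitive_root.
Qed.
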